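(* In the Basilica setup below, for every $n\in\mathbb{N}$ and all $\delta_1,\delta_2\in\{+,-\}$, the intersection $H_1^{\delta_1}\cap H_2^{\delta_2}\cap Y_n$ is non-empty.
   Context: Basilica replacement rule: edge $e\colon v\to w$ is replaced by $R$ with vertices $v,w,4$ and edges $1\colon v\to4$, loop $2$ at $4$, $3\colon4\to w$. Base graph $G_0$: vertices $x,y$, loop $a$ at $x$, loop $c$ at $y$, edges $b\colon x\to y$, $d\colon y\to x$. $K(G_0)$ is the rearrangement cube complex: $0$-cubes are range equivalence classes $[f]$ of rearrangements $f\colon X(G_0)\to X(G)$ between limit spaces (homeomorphisms represented by a directed graph isomorphism between an expansion of $G_0$ and an expansion of $G$, acting as canonical prefix replacements on cells); for each such $f$ and $S\subseteq E(G)$ there is a cube with $0$-cubes $\{[\Delta_T\circ f]:T\subseteq S\}$, where $\Delta_T$ is the expansion rearrangement expanding the edges of $T$ and $\nabla$ denotes the inverse (contraction) rearrangement of a copy of $R$, written by listing its three edges. It is $\operatorname{CAT}(0)$. The rank $h([f])=|E(G)|$, extended affinely; $K(G_0)_m$ is the subcomplex spanned by $0$-cubes of rank $\le m$. The graph $J_n$ ($n+5$ vertices, $2n+10$ edges): vertices $u_0,\dots,u_n,p,q,l,m$; for $0\le i<n$ edges $u_i\to u_{i+1}$ and $u_{i+1}\to u_i$; edges $v\colon u_0\to p$, loop $w$ at $p$, $x\colon p\to q$, loop $y$ at $q$, $z\colon q\to u_0$; edges $a\colon u_n\to l$, loop $b$ at $l$, $c\colon l\to m$, loop $d$ at $m$,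 $e\colon m\to u_n$. $J_n$ is an expansion of $G_0$; fix a rearrangement $f_n\colon X(G_0)\to X(J_n)$. Walls are parallel classes of $1$-cubes; $H_1$ is the wall containing the $1$-cube from $[f_n]$ to $[\nabla_{x,y,z}\circ f_n]$, and $H_2$ the wall containing the $1$-cube from $[f_n]$ to $[\nabla_{c,d,e}\circ f_n]$. For $i=1,2$, $H_i^+$ is the half-space of $H_i$ (subcomplex spanned by the $0$-cubes of one complementary component of the corresponding hyperplane) containing $[f_n]$, and $H_i^-$ is the other half-space. $Y_n\mathrel{:}=K(G_0)_{2n+9}$. *)

From Stdlib Require Import Relation_Operators.
From HB Require Import structures.
From mathcomp Require Import all_boot.
Set Implicit Arguments. Unset Strict Implicit. Unset Printing Implicit Defensive.

Record graph := Graph {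
  gV : finType; gE : finType; gsrc : gE -> gV; gtgt : gE -> gV }.

(* A cell address of X(G): an edge of G followed by a word over the three edges
   of the replacement graph R (index 0,1,2 = edges 1,2,3 of R; the head of the
   word is the first replacement step). *)
Notation addr G := (gE G * seq 'I_3)%type.
Definition acat (G : graph) (a : addr G) (w : seq 'I_3) : addr G := (a.1, a.2 ++ w).

(* Vertices of expansions of G: vertices of G, and the new vertex (vertex 4 of R)
   created when the cell a is expanded, named inr a. *)
Notation vtx G := (gV G + addr G)%type.

Inductive is_exp (G : graph) : seq (addr G) -> Prop :=
| exp_base : @is_exp G [seq (e, [::]) | e <- enum (gE G)]
| exp_step (C : seq (addr G)) (a : addr G) :
    a \in C -> @is_exp G C ->
    @is_exp G ([seq acat a [:: i] | i <- enum 'I_3] ++ rem a C).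

(* Endpoints (source, target) of a cell in any expansion containing it,
   following the replacement rule 1 : v -> 4, loop 2 at 4, 3 : 4 -> w. *)
Fixpoint endp_aux (G : graph) (e : gE G) (pre : seq 'I_3) (s t : vtx G)
    (w : seq 'I_3) : vtx G * vtx G :=
  match w with
  | [::] => (s, t)
  | i :: w' =>
      let m : vtx G := inr (e, pre) in
      let st := if val i == 0 then (s, m) else if val i == 1 then (m, m) else (m, t) in
      endp_aux e (rcons pre i) st.1 st.2 w'
  end.
Definition endp (G : graph) (a : addr G) : vtx G * vtx G :=
  endp_aux a.1 [::] (inl (gsrc a.1)) (inl (gtgt a.1)) a.2.

Definition sprefix (G : graph) (a c : addr G) : Prop :=
  a.1 = c.1 /\ exists (i : 'I_3) (u : seq 'I_3), c.2 = a.2 ++ i :: u.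

Definition vin (G : graph) (C : seq (addr G)) (x : vtx G) : Prop :=
  match x with inl _ => True | inr a => exists2 c, c \in C & sprefix a c end.

Definition is_iso_exp (G G' : graph) (C : seq (addr G)) (C' : seq (addr G'))
    (sigma : addr G -> addr G') (phi : vtx G -> vtx G') : Prop :=
  [/\ perm_eq (map sigma C) C',
      (forall x y, vin C x -> vin C y -> phi x = phi y -> x = y),
      (forall x, vin C x -> vin C' (phi x)),
      (forall y, vin C' y -> exists x, vin C x /\ phi x = y) &
      (forall c, c \in C -> endp (sigma c) = (phi (endp c).1, phi (endp c).2))].

(* F represents a rearrangement X(G) -> X(G'): a graph isomorphism between
   expansions, acting by canonical prefix replacement on cells. *)
Definition is_rearr (G G' : graph) (F : addr G -> addr G') : Prop :=
  exists (C : seq (addr G)) (C' : seq (addr G')) sigma phi,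
    [/\ @is_exp G C, @is_exp G' C', is_iso_exp C C' sigma phi &
        forall c w, c \in C -> F (acat c w) = acat (sigma c) w].

(* two address maps define the same homeomorphism *)
Definition ev_eq (G G' : graph) (F F' : addr G -> addr G') : Prop :=
  exists C, @is_exp G C /\ forall c w, c \in C -> F (acat c w) = F' (acat c w).

Definition giso (G G' : graph) (iV : gV G -> gV G') (iE : gE G -> gE G') : Prop :=
  [/\ bijective iV, bijective iE &
      forall e, gsrc (iE e) = iV (gsrc e) /\ gtgt (iE e) = iV (gtgt e)].

(* vertices x = 0, y = 1 ; edges a = 0 (loop at x), b = 1 (x->y), c = 2 (loop at y), d = 3 (y->x) *)
Definition G0 : graph := {|
  gV := 'I_2; gE := 'I_4;
  gsrc := fun e => if val e < 2 then (inord 0 : 'I_2) else inord 1;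
  gtgt := fun e => match val e with 0 => (inord 0 : 'I_2) | 1 => inord 1 | 2 => inord 1 | _ => inord 0 end |}.

Record rep := Rep { rG : graph; rF : addr G0 -> addr rG }.
Definition valid (r : rep) : Prop := is_rearr (rF r).

Definition req (a b : rep) : Prop :=
  exists (iV : gV (rG a) -> gV (rG b)) (iE : gE (rG a) -> gE (rG b)),
    giso iV iE /\ ev_eq (rF b) (fun x => (iE (rF a x).1, (rF a x).2)).

Definition expG (G : graph) (T : {set gE G}) : graph := {|
  gV := (gV G + {e : gE G | e \in T})%type;
  gE := ({e : gE G | e \notin T} + ({e : gE G | e \in T} * 'I_3))%type;
  gsrc := fun x => match x with
                  | inl e => inl (gsrc (val e))
                  | inr (e, i) => if val i == 0 then inl (gsrc (val e)) else inr e end;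
  gtgt := fun x => match x with
                  | inl e => inl (gtgt (val e))
                  | inr (e, i) => if val i == 2 then inl (gtgt (val e)) else inr e end |}.

Definition delta_addr (G : graph) (T : {set gE G}) (a : addr G) : addr (expG T) :=
  (if a.1 \in T as b return (a.1 \in T) = b -> addr (expG T) then
     fun H => ((inr (exist (fun x => x \in T) a.1 H, head ord0 a.2) : gE (expG T)), behead a.2)
   else
     fun H => ((inl (exist (fun x => x \notin T) a.1 (negbT H)) : gE (expG T)), a.2))
  (erefl (a.1 \in T)).

Definition dl (r : rep) (T : {set gE (rG r)}) : rep :=
  Rep (fun x => delta_addr T (rF r x)).

Definition onecube (u v : rep) : Prop :=
  exists (g : rep) (e : gE (rG g)), valid g /\
    ((req u g /\ req v (dl [set e])) \/ (req v g /\ req u (dl [set e]))).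

Definition same1 (k k' : rep * rep) : Prop :=
  (req k.1 k'.1 /\ req k.2 k'.2) \/ (req k.1 k'.2 /\ req k.2 k'.1).

(* k and k' are opposite 1-cubes of a 2-cube {[Delta_T g] : T subset {e,e'}} *)
Definition opp (k k' : rep * rep) : Prop :=
  exists (g : rep) (e e' : gE (rG g)), [/\ valid g, e != e',
    same1 k (g, dl [set e]) & same1 k' (dl [set e'], dl [set e; e'])].

(* parallel 1-cubes: k' lies in the wall containing k *)
Definition parallel (k k' : rep * rep) : Prop :=
  clos_refl_sym_trans _ (fun x y => opp x y \/ same1 x y) k k'.

(* 0-cubes reachable from [start] in the 1-skeleton without crossing the wall of k0 *)
Definition halfside (k0 : rep * rep) (start v : rep) : Prop :=
  clos_refl_trans _ (fun x y => req x y \/ (onecube x y /\ ~ parallel k0 (x, y))) start v.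

Definition ladder (n j k : nat) (s t : nat -> ('I_n.+1 + 'I_j)%type) : graph := {|
  gV := ('I_n.+1 + 'I_j)%type;
  gE := (('I_n + 'I_n) + 'I_k)%type;
  gsrc := fun e => match e with
                   | inl (inl i) => inl (inord i) | inl (inr i) => inl (inord i.+1)
                   | inr k => s (val k) end;
  gtgt := fun e => match e with
                   | inl (inl i) => inl (inord i.+1) | inl (inr i) => inl (inord i)
                   | inr k => t (val k) end |}.

Definition U n j (i : nat) : ('I_n.+1 + 'I_j)%type := inl (inord i).
Definition X n j (i : nat) : ('I_n.+1 + 'I_j.+1)%type := inr (inord i).

(* J_n: edges u_i -> u_{i+1}, u_{i+1} -> u_i, then v w x y z a b c d e = 0..9;
   extra vertices p q l m = 0..3 *)
Definition J (n : nat) : graph := @ladder n 4 10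
  (fun k => match k with 0 => U n 4 0 | 1 | 2 => X n 3 0 | 3 | 4 => X n 3 1
            | 5 => U n 4 n | 6 | 7 => X n 3 2 | _ => X n 3 3 end)
  (fun k => match k with 0 | 1 => X n 3 0 | 2 | 3 => X n 3 1 | 4 => U n 4 0
            | 5 | 6 => X n 3 2 | 7 | 8 => X n 3 3 | _ => U n 4 n end).

(* J_n with x,y,z contracted to a new edge N : p -> u_0.
   edges v w N a b c d e = 0..7 ; vertices p l m = 0..2 *)
Definition J1 (n : nat) : graph := @ladder n 3 8
  (fun k => match k with 0 => U n 3 0 | 1 | 2 => X n 2 0 | 3 => U n 3 n
            | 4 | 5 => X n 2 1 | _ => X n 2 2 end)
  (fun k => match k with 0 | 1 => X n 2 0 | 2 => U n 3 0 | 3 | 4 => X n 2 1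
            | 5 | 6 => X n 2 2 | _ => U n 3 n end).

(* J_n with c,d,e contracted to a new edge N : l -> u_n.
   edges v w x y z a b N = 0..7 ; vertices p q l = 0..2 *)
Definition J2 (n : nat) : graph := @ladder n 3 8
  (fun k => match k with 0 => U n 3 0 | 1 | 2 => X n 2 0 | 3 | 4 => X n 2 1
            | 5 => U n 3 n | _ => X n 2 2 end)
  (fun k => match k with 0 | 1 => X n 2 0 | 2 | 3 => X n 2 1 | 4 => U n 3 0
            | 5 | 6 => X n 2 2 | _ => U n 3 n end).

Definition nab1 (n : nat) (a : addr (J n)) : addr (J1 n) :=
  match a.1 with
  | inl e => ((inl e : gE (J1 n)), a.2)
  | inr k =>
      if val k < 2 then ((inr (inord (val k)) : gE (J1 n)), a.2)
      else if val k < 5 then ((inr (inord 2) : gE (J1 n)), (inord (val k - 2) : 'I_3) :: a.2)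
      else ((inr (inord (val k - 2)) : gE (J1 n)), a.2)
  end.

Definition nab2 (n : nat) (a : addr (J n)) : addr (J2 n) :=
  match a.1 with
  | inl e => ((inl e : gE (J2 n)), a.2)
  | inr k =>
      if val k < 7 then ((inr (inord (val k)) : gE (J2 n)), a.2)
      else ((inr (inord 7) : gE (J2 n)), (inord (val k - 7) : 'I_3) :: a.2)
  end.

(* half-space of wall H_i (i = 1,2) of sign d (true = +, false = -) for f_n *)
Definition Hhalf (n : nat) (fn : addr G0 -> addr (J n)) (i : nat) (d : bool) (v : rep) : Prop :=
  let f0 := Rep fn in
  let g := if i == 1 then Rep (fun x => nab1 (fn x)) else Rep (fun x => nab2 (fn x)) in
  halfside (f0, g) (if d then f0 else g) v.

From Stdlib Require Import Relation_Operators.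
From mathcomp Require Import all_boot zify.
Set Implicit Arguments. Unset Strict Implicit. Unset Printing Implicit Defensive.

(* Each of the four 0-cubes is reached from [f_n] by at most two contractions
   of copies of R in J_n, so its rank is at most 2n+9: [nabla_{v,w,x} f_n] for
   (+,+), [nabla_{x,y,z} f_n] for (-,+), [nabla_{c,d,e} f_n] for (+,-), and the
   contraction of both x,y,z and c,d,e for (-,-).  A contraction step stays in a
   half-space of H_i unless its 1-cube is parallel to the one defining H_i.
   Parallel 1-cubes change the depth of the same cells, up to cells of bounded
   depth, and the edges v, x or c of J_n supply arbitrarily deep cells on which
   the two 1-cubes in question disagree. *)

Lemma map_rem (T U : eqType) (f : T -> U) (x : T) (s : seq T) :
  injective f -> map f (rem x s) = rem (f x) (map f s).
Proof.
move=> f_inj; elim: s => //= y s IHs.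
by rewrite (inj_eq f_inj); case: eqP => //= _; rewrite IHs.
Qed.

Lemma perm_rem (T : eqType) (x : T) (s t : seq T) :
  perm_eq s t -> perm_eq (rem x s) (rem x t).
Proof. by move=> st; apply/permP => P; rewrite !count_rem (permP st) (perm_mem st). Qed.

Lemma is_exp_cover (G : graph) (C : seq (addr G)) : is_exp C ->
  exists N, (forall c, c \in C -> size c.2 <= N) /\
   forall a : addr G, N <= size a.2 -> exists c w, c \in C /\ a = acat c w.
Proof.
elim=> [|C0 a0 a0C _ [N [C0_depth C0_cover]]].
  exists 0; split=> [c /mapP [e _ ->] //|[e u] _].
  by exists (e, [::]), u; split => //; apply/mapP; exists e; rewrite ?mem_enum.
exists N.+1; split.
  move=> c; rewrite mem_cat => /orP [/mapP [i _ ->]|/mem_rem cC0].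
    by rewrite /acat /= size_cat /= addn1 ltnS C0_depth.
  exact/leqW/C0_depth.
move=> a deep_a; have [c [w [cC0 Ea]]] := C0_cover a (ltnW deep_a); subst a.
have [c_a0|c_a0] := eqVneq c a0; first subst c.
  case: w deep_a => [|i w] deep_a.
    by move: deep_a; rewrite /acat /= cats0 ltnNge (C0_depth _ a0C).
  exists (acat a0 [:: i]), w; split; last by rewrite /acat /= -catA.
  by rewrite mem_cat; apply/orP; left; apply: map_f; rewrite mem_enum.
by exists c, w; split => //; rewrite mem_cat rem_mem ?orbT.
Qed.

Lemma is_exp_edge (G : graph) (C : seq (addr G)) (e : gE G) : is_exp C ->
  exists2 c, c \in C & c.1 = e.
Proof.
move=> /is_exp_cover [N [_ cover]].
have [|c [w [cC /(congr1 fst) /= ce]]] := cover (e, nseq N ord0); last by exists c.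
by rewrite size_nseq.
Qed.

Definition eventually_eq (G : graph) (T : Type) (P Q : addr G -> T) : Prop :=
  exists N, forall a : addr G, N <= size a.2 -> P a = Q a.

Lemma eq_eventually_eq G T (P Q : addr G -> T) : P =1 Q -> eventually_eq P Q.
Proof. by move=> PQ; exists 0 => a _. Qed.

Lemma eventually_eq_sym G T (P Q : addr G -> T) :
  eventually_eq P Q -> eventually_eq Q P.
Proof. by move=> [N PQ]; exists N => a /PQ ->. Qed.

Lemma eventually_eq_trans G T (P Q R : addr G -> T) :
  eventually_eq P Q -> eventually_eq Q R -> eventually_eq P R.
Proof.
move=> [N1 PQ] [N2 QR]; exists (maxn N1 N2) => a; rewrite geq_max => /andP [a1 a2].
by rewrite PQ ?QR.
Qed.

Lemma ev_eq_eventually_eq (G G' : graph) (F F' : addr G -> addr G') :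
  ev_eq F F' -> eventually_eq F F'.
Proof.
move=> [C [HC FF']]; have [N [_ cover]] := is_exp_cover HC.
by exists N => a /cover [c [w [cC ->]]]; apply: FF'.
Qed.

Lemma req_refl (r : rep) : req r r.
Proof.
exists id, id; split; first by split; try exists id.
exists [seq (e, [::]) | e <- enum (gE G0)]; split; first exact: exp_base.
by move=> c w _; case: (rF r _).
Qed.

Definition depth (r : rep) (a : addr G0) : nat := size (rF r a).2.

(* The cells landing in the edge expanded along the 1-cube [k]. *)
Definition depth_changes (k : rep * rep) (a : addr G0) : bool :=
  depth k.1 a != depth k.2 a.

Lemma req_depth u v : req u v -> eventually_eq (depth u) (depth v).
Proof.
move=> [iV [iE [_ /ev_eq_eventually_eq [N uv]]]].
by exists N => a /uv; rewrite /depth => ->.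
Qed.

Lemma same1_depth_changes k k' : same1 k k' ->
  eventually_eq (depth_changes k) (depth_changes k').
Proof.
case=> [[/req_depth [N1 E1] /req_depth [N2 E2]]|[/req_depth [N1 E1] /req_depth [N2 E2]]];
  exists (maxn N1 N2) => a; rewrite geq_max => /andP [a1 a2];
  by rewrite /depth_changes E1 ?E2 1?eq_sym.
Qed.

Lemma delta_addr_in (G : graph) (T : {set gE G}) (a : addr G) (aT : a.1 \in T) :
  delta_addr T a =
  ((inr (exist (fun x => x \in T) a.1 aT, head ord0 a.2) : gE (expG T)), behead a.2).
Proof.
rewrite /delta_addr; move: (erefl (a.1 \in T)); case: {2 3}(a.1 \in T) => aT'.
  by rewrite (eq_irrelevance aT aT').
by exfalso; move: aT; rewrite aT'.
Qed.

Lemma delta_addr_notin (G : graph) (T : {set gE G}) (a : addr G) (aT : a.1 \notin T) :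
  delta_addr T a = ((inl (exist (fun x => x \notin T) a.1 aT) : gE (expG T)), a.2).
Proof.
rewrite /delta_addr; move: (erefl (a.1 \in T)); case: {2 3}(a.1 \in T) => aT'.
  by exfalso; move: aT; rewrite aT'.
by rewrite (eq_irrelevance aT (negbT aT')).
Qed.

Lemma size_delta_addr (G : graph) (T : {set gE G}) (a : addr G) :
  size (delta_addr T a).2 = if a.1 \in T then (size a.2).-1 else size a.2.
Proof.
case: (boolP (a.1 \in T)) => aT; first by rewrite (delta_addr_in aT) size_behead.
by rewrite (delta_addr_notin aT).
Qed.

Lemma depth_changes_opp (g : rep) (e e' : gE (rG g)) : e != e' ->
  depth_changes (g, dl [set e]) =1 depth_changes (dl [set e'], dl [set e; e']).
Proof.
move=> ee' a; rewrite /depth_changes /depth /= !size_delta_addr !inE.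
have [->|_] /= := eqVneq (rF g a).1 e; first by rewrite (negbTE ee').
by rewrite eqxx; case: (_ == e') => /=; rewrite eqxx.
Qed.

Lemma parallel_depth_changes k0 k : parallel k0 k ->
  eventually_eq (depth_changes k0) (depth_changes k).
Proof.
elim=> [x y [[g [e [e' [_ ee' S1 S2]]]]|S]|x|x y _ IH|x y z _ IH1 _ IH2].
- apply: eventually_eq_trans (same1_depth_changes S1) _.
  apply: eventually_eq_trans (eq_eventually_eq (depth_changes_opp ee')) _.
  exact: eventually_eq_sym (same1_depth_changes S2).
- exact: same1_depth_changes.
- exact: eq_eventually_eq.
- exact: eventually_eq_sym.
- exact: eventually_eq_trans IH1 IH2.
Qed.

Lemma rearr_deep_cell (G : graph) (F : addr G0 -> addr G) (e : gE G) :
  is_rearr F -> forall M, exists a, M <= size a.2 /\ exists u, F a = (e, u).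
Proof.
move=> [C [C' [sigma [phi [HC HC' [sigmaC' _ _ _ _] HF]]]]] M.
have [c' c'C' <-] := is_exp_edge e HC'.
have /mapP [c cC ->] : c' \in map sigma C by rewrite (perm_mem sigmaC').
exists (acat c (nseq M ord0)); split; first by rewrite /= size_cat size_nseq leq_addl.
by rewrite HF //; eexists.
Qed.

Lemma not_parallel_of_edge (G : graph) (F : addr G0 -> addr G) (e : gE G) k0 k :
  is_rearr F -> (forall a u, F a = (e, u) -> depth_changes k0 a <> depth_changes k a) ->
  ~ parallel k0 k.
Proof.
move=> F_rearr differ /parallel_depth_changes [M agree].
have [a [deep_a [u Fa]]] := rearr_deep_cell e F_rearr M.
exact: differ Fa (agree a deep_a).
Qed.

Lemma endp_aux_shift (G G' : graph) (e : gE G) (e' : gE G') (p0 : seq 'I_3)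
    (psi : vtx G -> vtx G') :
  (forall p, psi (inr (e, p)) = inr (e', p0 ++ p)) ->
  forall w pre s t, endp_aux e' (p0 ++ pre) (psi s) (psi t) w =
    (psi (endp_aux e pre s t w).1, psi (endp_aux e pre s t w).2).
Proof.
move=> psi_mid; elim=> [|i w IHw] pre s t //=.
by rewrite rcons_cat -psi_mid; case: ifP => _; [|case: ifP => _]; rewrite /= IHw.
Qed.

(* [iE, iV] identify [G] with the expansion of [G'] at the edge [N];
   [contract] is the contraction rearrangement [X(G) -> X(G')] collapsing the
   three edges of that copy of [R] back to [N]. *)
Section Contraction.
Variables (G G' : graph) (N : gE G').
Variables (iV : gV G -> gV (expG [set N])) (iE : gE G -> gE (expG [set N])).
Hypothesis iso : giso iV iE.

Definition contract_edge (x : gE (expG [set N])) (u : seq 'I_3) : addr G' :=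
  match x with inl e' => (val e', u) | inr (_, i) => (N, i :: u) end.

Definition contract (a : addr G) : addr G' := contract_edge (iE a.1) a.2.

Definition contract_vtx (x : vtx G) : vtx G' :=
  match x with
  | inl v => if iV v is inl v' then inl v' else inr (N, [::])
  | inr a => inr (contract a)
  end.

Lemma contract_acat a w : contract (acat a w) = acat (contract a) w.
Proof. by rewrite /contract /acat /=; case: (iE a.1) => [e'|[s i]]. Qed.

Lemma val_set1 (s : {x : gE G' | x \in [set N]}) : val s = N.
Proof. by case: s => x /=; rewrite inE => /eqP. Qed.

Lemma val_notin_set1 (s : {x : gE G' | x \notin [set N]}) : val s != N.
Proof. by case: s => x /=; rewrite inE. Qed.

Lemma iE_inj : injective iE.
Proof. by case: iso => _ /bij_inj. Qed.

Lemma iV_inj : injective iV.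
Proof. by case: iso => /bij_inj. Qed.

Lemma iE_surj y : exists e, iE e = y.
Proof. by case: iso => _ [g _ gK] _; exists (g y); rewrite gK. Qed.

Lemma iV_surj y : exists v, iV v = y.
Proof. by case: iso => [[g _ gK]] _ _; exists (g y); rewrite gK. Qed.

Lemma contract_inj : injective contract.
Proof.
move=> [e1 u1] [e2 u2]; rewrite /contract /=.
case E1: (iE e1) => [x1|[s1 i1]]; case E2: (iE e2) => [x2|[s2 i2]] /= [].
- by move=> /val_inj x12 ->; rewrite x12 -E2 in E1; rewrite (iE_inj E1).
- by move=> x1N; case/eqP: (val_notin_set1 x1).
- by move=> /esym x2N; case/eqP: (val_notin_set1 x2).
- move=> i12 ->; have s12 : s1 = s2 by apply: val_inj; rewrite !val_set1.
  by rewrite s12 i12 -E2 in E1; rewrite (iE_inj E1).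
Qed.

Lemma contract_neq_root a : contract a != (N, [::]).
Proof.
case: a => e u; rewrite /contract /=; case: (iE e) => [x|[s i]] /=; last by rewrite xpair_eqE andbF.
by apply/eqP => -[xN _]; case/eqP: (val_notin_set1 x).
Qed.

Lemma contract_vtx_inj : injective contract_vtx.
Proof.
move=> [v1|a1] [v2|a2] /=.
- case E1: (iV v1) => [x1|s1]; case E2: (iV v2) => [x2|s2] //.
    by case=> x12; rewrite x12 -E2 in E1; rewrite (iV_inj E1).
  have s12 : s1 = s2 by apply: val_inj; rewrite !val_set1.
  by rewrite s12 -E2 in E1; rewrite (iV_inj E1).
- by case: (iV v1) => // s [/esym/eqP]; rewrite (negbTE (contract_neq_root a2)).
- by case: (iV v2) => // s [/eqP]; rewrite (negbTE (contract_neq_root a1)).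
- by case=> /contract_inj ->.
Qed.

Lemma endp_contract a :
  endp (contract a) = (contract_vtx (endp a).1, contract_vtx (endp a).2).
Proof.
case: iso => _ _ iso_ends; case: a => e u; rewrite /endp /contract /=.
have [Es Et] := iso_ends e.
have mid p : contract_vtx (inr (e, p)) = inr (contract_edge (iE e) p) by [].
case E: (iE e) Es Et mid => [e'|[s j]] /= Es Et mid.
- have := @endp_aux_shift G G' e (val e') [::] contract_vtx mid u [::]
    (inl (gsrc e)) (inl (gtgt e)).
  by rewrite /= -Es -Et.
- have := @endp_aux_shift G G' e N [:: j] contract_vtx mid u [::]
    (inl (gsrc e)) (inl (gtgt e)).
  rewrite /= -Es -Et /= !val_set1 => <-.
  by case: j {E Es Et mid} => [[|[|[|m]]] jlt].
Qed.

Lemma is_exp_contract C : is_exp C -> exists2 C', is_exp C' & perm_eq (map contract C) C'.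
Proof.
elim=> [|C0 a aC0 _ [C' C'exp C0C']]; last first.
  have aC' : contract a \in C' by rewrite -(perm_mem C0C') map_f.
  exists ([seq acat (contract a) [:: i] | i <- enum 'I_3] ++ rem (contract a) C');
    first exact: exp_step.
  rewrite map_cat -map_comp (eq_map (fun i => contract_acat a [:: i])).
  by rewrite perm_cat2l (map_rem _ _ contract_inj) perm_rem.
pose B := [seq ((e, [::]) : addr G') | e <- enum (gE G')].
have NB : ((N, [::]) : addr G') \in B by rewrite map_f ?mem_enum.
have uB : uniq B by rewrite map_inj_uniq ?enum_uniq // => x y [].
exists ([seq acat (N, [::]) [:: i] | i <- enum 'I_3] ++ rem (N, [::]) B);
  first by apply: exp_step NB _; apply: exp_base.
apply: uniq_perm.
- by rewrite (map_inj_uniq contract_inj) map_inj_uniq ?enum_uniq // => x y [].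
- rewrite cat_uniq rem_uniq // map_inj_uniq ?enum_uniq ?andbT; last by move=> x y [].
  by apply/hasPn => z /mem_rem /mapP [e _ ->]; apply/negP => /mapP [i _].
move=> x; apply/idP/idP.
  move=> /mapP [c /mapP [e _ ->] ->]; rewrite /contract /=.
  case: (iE e) => [e'|[s j]] /=; rewrite mem_cat; apply/orP; last first.
    by left; apply/mapP; exists j; rewrite ?mem_enum.
  right; rewrite rem_mem ?map_f ?mem_enum //.
  by rewrite xpair_eqE (negbTE (val_notin_set1 e')).
rewrite mem_cat => /orP [/mapP [i _ ->]|x_rem].
  have [e Ee] := iE_surj (inr (exist _ N (set11 N), i)).
  by apply/mapP; exists (e, [::]); rewrite ?map_f ?mem_enum // /contract /= Ee.
have /mapP [e' _ Ex] := mem_rem x_rem; subst x.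
have e'N : e' \notin [set N].
  by rewrite inE; apply: contraTneq x_rem => ->; rewrite mem_rem_uniqF.
have [e Ee] := iE_surj (inl (exist _ e' e'N)).
by apply/mapP; exists (e, [::]); rewrite ?map_f ?mem_enum // /contract /= Ee.
Qed.

Lemma sprefix_contract a c : sprefix a c -> sprefix (contract a) (contract c).
Proof.
case: a c => [e u] [e' u'] [/= <-] [i [w /= ->]].
have -> : ((e, u ++ i :: w) : addr G) = acat (e, u) (i :: w) by [].
by rewrite contract_acat; split => //; exists i, w.
Qed.

Lemma rearr_contract (G0' : graph) (F : addr G0' -> addr G) (H : addr G0' -> addr G') :
  is_rearr F -> (forall x, H x = contract (F x)) -> is_rearr H.
Proof.
move=> [C [C' [sigma [phi [HC HC' [sigmaC' phi_inj phi_in phi_onto ends] HF]]]]] HFc.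
have [C2 HC2 C'C2] := is_exp_contract HC'.
have memC2 x : (x \in C2) = (x \in map contract C') by rewrite (perm_mem C'C2).
have vin_contract y : vin C' y -> vin C2 (contract_vtx y).
  case: y => [v|a] /=.
    case: (iV v) => [v'|s] // _.
    have [e Ee] := iE_surj (inr (s, ord0)).
    have [c cC' ce] := is_exp_edge e HC'.
    exists (contract c); first by rewrite memC2 map_f.
    by rewrite /contract ce Ee /=; split=> //; exists ord0, c.2.
  move=> [c cC' ac]; exists (contract c); first by rewrite memC2 map_f.
  exact: sprefix_contract.
have vin_onto y : vin C2 y -> exists y', vin C' y' /\ contract_vtx y' = y.
  case: y => [v'|[b1 b2]] /=.
    by have [v Ev] := iV_surj (inl v'); exists (inl v); rewrite /= Ev.
  move=> [c2]; rewrite memC2 => /mapP [[e u] cC' ->]; rewrite /contract /=.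
  case E: (iE e) => [e'|[s j]] /= [/= b1E [i [w bu]]]; subst b1.
    exists (inr (e, b2)); split; last by rewrite /= /contract /= E.
    by exists (e, u) => //; split => //; exists i, w.
  case: b2 bu => [|j' b2] /= bu.
    by have [v Ev] := iV_surj (inr s); exists (inl v); rewrite /= Ev.
  case: bu => jj' ub; subst j'.
  exists (inr (e, b2)); split; last by rewrite /= /contract /= E.
  by exists (e, u) => //; split => //; exists i, w.
exists C, C2, (fun c => contract (sigma c)), (fun x => contract_vtx (phi x)).
split=> //; last by move=> c w cC; rewrite HFc HF // contract_acat.
split.
- by rewrite (map_comp contract sigma); apply: perm_trans C'C2; rewrite perm_map.
- by move=> x y Hx Hy /contract_vtx_inj; apply: phi_inj.
- by move=> x /phi_in /vin_contract.
- move=> y /vin_onto [y' [/phi_onto [x [Hx <-]] <-]]; by exists x.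
- by move=> c cC; rewrite endp_contract ends.
Qed.

Lemma req_contract (F : addr G0 -> addr G) (H : addr G0 -> addr G') :
  (forall x, H x = contract (F x)) -> req (Rep F) (dl (r := Rep H) [set N]).
Proof.
move=> HFc; exists iV, iE; split => //.
exists [seq (e, [::]) | e <- enum (gE G0)]; split; first exact: exp_base.
move=> c w _; rewrite /= HFc /contract /contract_edge.
case: (iE _) => [[e' e'N] | [s j]] /=; first by rewrite delta_addr_notin.
rewrite delta_addr_in; first by rewrite inE.
by move=> NN /=; congr (inr (_, _), _); apply: val_inj; rewrite /= val_set1.
Qed.

Lemma halfside_contract k0 (F : addr G0 -> addr G) (H : addr G0 -> addr G') :
  is_rearr F -> (forall x, H x = contract (F x)) -> ~ parallel k0 (Rep F, Rep H) ->
  halfside k0 (Rep F) (Rep H).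
Proof.
move=> F_rearr HFc not_par; apply: rt_step; right; split=> //.
exists (Rep H), N; split; first exact: rearr_contract F_rearr HFc.
by right; split; [exact: req_refl | exact: req_contract].
Qed.

End Contraction.

(* [L] is identified with the expansion of [L'] at its extra edge [N].  On the
   extra vertices, [mv z = None] marks the vertex created by the expansion; on
   the extra edges, [me y = inr i] marks the [i]-th edge of the copy of [R]. *)
Section LadderExpansion.
Variables (n j k j' k' : nat) (s t : nat -> ('I_n.+1 + 'I_j)%type)
  (s' t' : nat -> ('I_n.+1 + 'I_j')%type) (N : 'I_k').
Variables (mv : 'I_j -> option 'I_j') (me : 'I_k -> ('I_k' + 'I_3)%type)
  (mvi : 'I_j' -> 'I_j) (mid : 'I_j) (mei : 'I_k' -> 'I_k) (ch : 'I_3 -> 'I_k).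

Let L := @ladder n j k s t.
Let L' := @ladder n j' k' s' t'.
Let T : {set gE L'} := [set inr N].

Definition ladder_new_edge : {x : gE L' | x \in T} := exist _ (inr N) (set11 _).

Lemma ladder_new_edge_uniq (x : {x : gE L' | x \in T}) : x = ladder_new_edge.
Proof. by apply: val_inj; case: x => y /=; rewrite inE => /eqP. Qed.

Definition ladder_iV (x : gV L) : gV (expG T) :=
  match x with
  | inl i => inl (inl i)
  | inr z => if mv z is Some z' then inl (inr z') else inr ladder_new_edge
  end.

Lemma ladder_rung_notin (l : ('I_n + 'I_n)%type) : (inl l : gE L') \notin T.
Proof. by rewrite inE. Qed.

Definition ladder_iE (x : gE L) : gE (expG T) :=
  match x with
  | inl l => inl (exist _ (inl l : gE L') (ladder_rung_notin l))
  | inr y => match me y with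
      | inl y' => if insub (inr y' : gE L') is Some z then inl z
                  else inr (ladder_new_edge, ord0)
      | inr i => inr (ladder_new_edge, i)
      end
  end.

Hypothesis mv_inv : forall z, if mv z is Some z' then mvi z' == z else z == mid.
Hypothesis mviK : forall z', mv (mvi z') == Some z'.
Hypothesis mv_mid : mv mid == None.
Hypothesis me_inv :
  forall y, match me y with inl y' => (y' != N) && (mei y' == y) | inr i => ch i == y end.
Hypothesis meiK : forall y', y' != N -> me (mei y') == inl y'.
Hypothesis me_ch : forall i, me (ch i) == inr i.
Hypothesis me_src : forall y : 'I_k, match me y with
  | inl y' => inl (s' y') = ladder_iV (s y)
  | inr i => (if val i == 0 then inl (s' N) else inr ladder_new_edge) = ladder_iV (s y)
  end.
Hypothesis me_tgt : forall y : 'I_k, match me y with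
  | inl y' => inl (t' y') = ladder_iV (t y)
  | inr i => (if val i == 2 then inl (t' N) else inr ladder_new_edge) = ladder_iV (t y)
  end.

Lemma ladder_edge_notin (y' : 'I_k') : y' != N -> (inr y' : gE L') \notin T.
Proof. by move=> y'N; rewrite inE; apply: contra y'N => /eqP [->]. Qed.

Lemma ladder_insub (y' : 'I_k') (y'N : y' != N) :
  insub (inr y' : gE L') =
  Some (exist (fun x => x \notin T) (inr y' : gE L') (ladder_edge_notin y'N)).
Proof. exact: insubT. Qed.

Lemma ladder_giso : giso ladder_iV ladder_iE.
Proof.
split.
- pose g (x : gV (expG T)) : gV L :=
    match x with inl (inl i) => inl i | inl (inr z') => inr (mvi z') | inr _ => inr mid end.
  exists g.
    by case=> [i|z] //=; move: (mv_inv z); case: (mv z) => [z'|] /= /eqP ->.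
  case=> [[i|z']|x] //=; first by rewrite (eqP (mviK z')).
  by rewrite (eqP mv_mid) (ladder_new_edge_uniq x).
- pose g (x : gE (expG T)) : gE L :=
    match x with
    | inl z => match val z with inl l => inl l | inr y' => inr (mei y') end
    | inr (_, i) => inr (ch i)
    end.
  exists g.
    case=> [l|y] //=; move: (me_inv y); case: (me y) => [y'|i]; last by move=> /eqP <-.
    by case/andP=> y'N /eqP <-; rewrite (ladder_insub y'N).
  case=> [[[l|y'] y'T]|[x i]] /=; first by congr inl; apply: val_inj.
    have y'N : y' != N by apply: contra y'T => /eqP ->; rewrite inE.
    by rewrite (eqP (meiK y'N)) (ladder_insub y'N); congr inl; apply: val_inj.
  by rewrite (eqP (me_ch i)) (ladder_new_edge_uniq x).
- case=> [[l|l]|y] //=; move: (me_inv y) (me_src y) (me_tgt y).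
  case: (me y) => [y'|i] /=; last by move=> _ -> ->.
  by case/andP=> y'N _; rewrite (ladder_insub y'N) => -> ->.
Qed.

Lemma contract_ladder (y : 'I_k) u : contract ladder_iE (inr y, u) =
  match me y with inl y' => (inr y', u) | inr i => (inr N, i :: u) end.
Proof.
rewrite /contract /=; move: (me_inv y); case: (me y) => [y'|i] //=.
by case/andP=> y'N _; rewrite (ladder_insub y'N).
Qed.

End LadderExpansion.

Unset Implicit Arguments.

Definition sJ n := fun k => match k with
  | 0 => U n 4 0 | 1 | 2 => X n 3 0 | 3 | 4 => X n 3 1
  | 5 => U n 4 n | 6 | 7 => X n 3 2 | _ => X n 3 3 end.
Definition tJ n := fun k => match k with
  | 0 | 1 => X n 3 0 | 2 | 3 => X n 3 1 | 4 => U n 4 0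
  | 5 | 6 => X n 3 2 | 7 | 8 => X n 3 3 | _ => U n 4 n end.
Definition sJ1 n := fun k => match k with
  | 0 => U n 3 0 | 1 | 2 => X n 2 0 | 3 => U n 3 n | 4 | 5 => X n 2 1 | _ => X n 2 2 end.
Definition tJ1 n := fun k => match k with
  | 0 | 1 => X n 2 0 | 2 => U n 3 0 | 3 | 4 => X n 2 1 | 5 | 6 => X n 2 2 | _ => U n 3 n end.
Definition sJ2 n := fun k => match k with
  | 0 => U n 3 0 | 1 | 2 => X n 2 0 | 3 | 4 => X n 2 1 | 5 => U n 3 n | _ => X n 2 2 end.
Definition tJ2 n := fun k => match k with
  | 0 | 1 => X n 2 0 | 2 | 3 => X n 2 1 | 4 => U n 3 0 | 5 | 6 => X n 2 2 | _ => U n 3 n end.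

(* J_n with both x,y,z and c,d,e contracted: edges v w N a b N' = 0..5, vertices p l = 0..1 *)
Definition sJ12 n := fun k => match k with
  | 0 => U n 2 0 | 1 | 2 => X n 1 0 | 3 => U n 2 n | _ => X n 1 1 end.
Definition tJ12 n := fun k => match k with
  | 0 | 1 => X n 1 0 | 2 => U n 2 0 | 3 | 4 => X n 1 1 | _ => U n 2 n end.
Definition J12 n : graph := @ladder n 2 6 (sJ12 n) (tJ12 n).

(* [cord N m] is [m] (when [m <= N]) as an element of ['I_N.+1]; unlike [inord]
   it reduces by computation. *)
Definition cord (N m : nat) : 'I_N.+1 := Ordinal (ltn_pmod m (ltn0Sn N)).

Lemma inord_cord N m : m < N.+1 -> inord m = cord N m.
Proof. by move=> mN; apply: val_inj; rewrite /= inordK // modn_small. Qed.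

Definition nab_vwx n (a : addr (J n)) : addr (J1 n) :=
  match a.1 with
  | inl e => ((inl e : gE (J1 n)), a.2)
  | inr k => if val k < 3 then ((inr (cord 7 0) : gE (J1 n)), cord 2 k :: a.2)
             else ((inr (cord 7 (k - 2)) : gE (J1 n)), a.2)
  end.

Definition nab_cde1 n (a : addr (J1 n)) : addr (J12 n) :=
  match a.1 with
  | inl e => ((inl e : gE (J12 n)), a.2)
  | inr k => if val k < 5 then ((inr (cord 5 k) : gE (J12 n)), a.2)
             else ((inr (cord 5 5) : gE (J12 n)), cord 2 (k - 5) :: a.2)
  end.

Ltac simpl_ladder :=
  rewrite /nab1 /nab2 /nab_vwx /nab_cde1 /= /X /U ?inord_cord ?ltnSn //.

Ltac ord_cases_by tac :=
  case; let rec go := first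
    [ let H := fresh in move=> ? H; discriminate H
    | let i := fresh "i" in move=> [|i]; [move=> ?; tac | move: i; go] ]
  in go.

Ltac ord_cases := ord_cases_by simpl_ladder.

(* [J n] as the expansion of [J1 n] at its edge 2, the copy of R being x,y,z
   (edges 2,3,4 of [J n]) with middle vertex q (extra vertex 1). *)
Definition mv_xyz (z : 'I_4) : option 'I_3 :=
  match val z with 0 => Some (cord 2 0) | 1 => None | 2 => Some (cord 2 1) | _ => Some (cord 2 2) end.
Definition mvi_xyz (z : 'I_3) : 'I_4 :=
  match val z with 0 => cord 3 0 | 1 => cord 3 2 | _ => cord 3 3 end.
Definition me_xyz (y : 'I_10) : ('I_8 + 'I_3)%type :=
  match val y with 0 => inl (cord 7 0) | 1 => inl (cord 7 1) | 2 => inr (cord 2 0)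
  | 3 => inr (cord 2 1) | 4 => inr (cord 2 2) | m => inl (cord 7 (m - 2)) end.
Definition mei_xyz (y : 'I_8) : 'I_10 :=
  match val y with 0 => cord 9 0 | 1 => cord 9 1 | m => cord 9 (m + 2) end.
Definition ch_xyz (i : 'I_3) : 'I_10 := cord 9 (i + 2).

Lemma me_xyz_inv y : match me_xyz y with
  | inl y' => (y' != cord 7 2) && (mei_xyz y' == y) | inr i => ch_xyz i == y end.
Proof. move: y; ord_cases. Qed.

Definition iV_xyz n := @ladder_iV n 4 10 3 8 (sJ n) (tJ n) (sJ1 n) (tJ1 n) (cord 7 2) mv_xyz.
Definition iE_xyz n := @ladder_iE n 4 10 3 8 (sJ n) (tJ n) (sJ1 n) (tJ1 n) (cord 7 2) me_xyz.

Lemma giso_xyz n : giso (iV_xyz n) (iE_xyz n).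
Proof.
by apply: (ladder_giso (mvi := mvi_xyz) (mid := cord 3 1) (mei := mei_xyz) (ch := ch_xyz)) => //;
  ord_cases.
Qed.

Lemma nab1_contract n a : nab1 a = contract (iE_xyz n) a.
Proof.
case: a => [[l|y] u] //; rewrite (contract_ladder _ _ _ _ me_xyz_inv).
by move: y; ord_cases.
Qed.

Definition mv_cde (z : 'I_4) : option 'I_3 :=
  match val z with 0 => Some (cord 2 0) | 1 => Some (cord 2 1) | 2 => Some (cord 2 2) | _ => None end.
Definition mvi_cde (z : 'I_3) : 'I_4 := cord 3 z.
Definition me_cde (y : 'I_10) : ('I_8 + 'I_3)%type :=
  match val y with 7 => inr (cord 2 0) | 8 => inr (cord 2 1) | 9 => inr (cord 2 2)
  | m => inl (cord 7 m) end.
Definition mei_cde (y : 'I_8) : 'I_10 := cord 9 y.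
Definition ch_cde (i : 'I_3) : 'I_10 := cord 9 (i + 7).

Lemma me_cde_inv y : match me_cde y with
  | inl y' => (y' != cord 7 7) && (mei_cde y' == y) | inr i => ch_cde i == y end.
Proof. move: y; ord_cases. Qed.

Definition iV_cde n := @ladder_iV n 4 10 3 8 (sJ n) (tJ n) (sJ2 n) (tJ2 n) (cord 7 7) mv_cde.
Definition iE_cde n := @ladder_iE n 4 10 3 8 (sJ n) (tJ n) (sJ2 n) (tJ2 n) (cord 7 7) me_cde.

Lemma giso_cde n : giso (iV_cde n) (iE_cde n).
Proof.
by apply: (ladder_giso (mvi := mvi_cde) (mid := cord 3 3) (mei := mei_cde) (ch := ch_cde)) => //;
  ord_cases.
Qed.

Lemma nab2_contract n a : nab2 a = contract (iE_cde n) a.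
Proof.
case: a => [[l|y] u] //; rewrite (contract_ladder _ _ _ _ me_cde_inv).
by move: y; ord_cases.
Qed.

Definition mv_vwx (z : 'I_4) : option 'I_3 :=
  match val z with 0 => None | 1 => Some (cord 2 0) | 2 => Some (cord 2 1) | _ => Some (cord 2 2) end.
Definition mvi_vwx (z : 'I_3) : 'I_4 := cord 3 z.+1.
Definition me_vwx (y : 'I_10) : ('I_8 + 'I_3)%type :=
  match val y with 0 => inr (cord 2 0) | 1 => inr (cord 2 1) | 2 => inr (cord 2 2)
  | m => inl (cord 7 (m - 2)) end.
Definition mei_vwx (y : 'I_8) : 'I_10 := cord 9 (y + 2).
Definition ch_vwx (i : 'I_3) : 'I_10 := cord 9 i.

Lemma me_vwx_inv y : match me_vwx y with
  | inl y' => (y' != cord 7 0) && (mei_vwx y' == y) | inr i => ch_vwx i == y end.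
Proof. move: y; ord_cases. Qed.

Definition iV_vwx n := @ladder_iV n 4 10 3 8 (sJ n) (tJ n) (sJ1 n) (tJ1 n) (cord 7 0) mv_vwx.
Definition iE_vwx n := @ladder_iE n 4 10 3 8 (sJ n) (tJ n) (sJ1 n) (tJ1 n) (cord 7 0) me_vwx.

Lemma giso_vwx n : giso (iV_vwx n) (iE_vwx n).
Proof.
by apply: (ladder_giso (mvi := mvi_vwx) (mid := cord 3 0) (mei := mei_vwx) (ch := ch_vwx)) => //;
  ord_cases.
Qed.

Lemma nab_vwx_contract n a : nab_vwx n a = contract (iE_vwx n) a.
Proof.
case: a => [[l|y] u] //; rewrite (contract_ladder _ _ _ _ me_vwx_inv).
by move: y; ord_cases.
Qed.

Definition mv_cde1 (z : 'I_3) : option 'I_2 :=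
  match val z with 0 => Some (cord 1 0) | 1 => Some (cord 1 1) | _ => None end.
Definition mvi_cde1 (z : 'I_2) : 'I_3 := cord 2 z.
Definition me_cde1 (y : 'I_8) : ('I_6 + 'I_3)%type :=
  match val y with 5 => inr (cord 2 0) | 6 => inr (cord 2 1) | 7 => inr (cord 2 2)
  | m => inl (cord 5 m) end.
Definition mei_cde1 (y : 'I_6) : 'I_8 := cord 7 y.
Definition ch_cde1 (i : 'I_3) : 'I_8 := cord 7 (i + 5).

Lemma me_cde1_inv y : match me_cde1 y with
  | inl y' => (y' != cord 5 5) && (mei_cde1 y' == y) | inr i => ch_cde1 i == y end.
Proof. move: y; ord_cases. Qed.

Definition iV_cde1 n := @ladder_iV n 3 8 2 6 (sJ1 n) (tJ1 n) (sJ12 n) (tJ12 n) (cord 5 5) mv_cde1.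
Definition iE_cde1 n := @ladder_iE n 3 8 2 6 (sJ1 n) (tJ1 n) (sJ12 n) (tJ12 n) (cord 5 5) me_cde1.

Lemma giso_cde1 n : giso (iV_cde1 n) (iE_cde1 n).
Proof.
by apply: (ladder_giso (mvi := mvi_cde1) (mid := cord 2 2) (mei := mei_cde1) (ch := ch_cde1)) => //;
  ord_cases.
Qed.

Lemma nab_cde1_contract n a : nab_cde1 n a = contract (iE_cde1 n) a.
Proof.
case: a => [[l|y] u] //; rewrite (contract_ladder _ _ _ _ me_cde1_inv).
by move: y; ord_cases.
Qed.

Definition mv_xyz2 (z : 'I_3) : option 'I_2 :=
  match val z with 0 => Some (cord 1 0) | 1 => None | _ => Some (cord 1 1) end.
Definition mvi_xyz2 (z : 'I_2) : 'I_3 := match val z with 0 => cord 2 0 | _ => cord 2 2 end.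
Definition me_xyz2 (y : 'I_8) : ('I_6 + 'I_3)%type :=
  match val y with 0 => inl (cord 5 0) | 1 => inl (cord 5 1) | 2 => inr (cord 2 0)
  | 3 => inr (cord 2 1) | 4 => inr (cord 2 2) | m => inl (cord 5 (m - 2)) end.
Definition mei_xyz2 (y : 'I_6) : 'I_8 :=
  match val y with 0 => cord 7 0 | 1 => cord 7 1 | m => cord 7 (m + 2) end.
Definition ch_xyz2 (i : 'I_3) : 'I_8 := cord 7 (i + 2).

Lemma me_xyz2_inv y : match me_xyz2 y with
  | inl y' => (y' != cord 5 2) && (mei_xyz2 y' == y) | inr i => ch_xyz2 i == y end.
Proof. move: y; ord_cases. Qed.

Definition iV_xyz2 n := @ladder_iV n 3 8 2 6 (sJ2 n) (tJ2 n) (sJ12 n) (tJ12 n) (cord 5 2) mv_xyz2.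
Definition iE_xyz2 n := @ladder_iE n 3 8 2 6 (sJ2 n) (tJ2 n) (sJ12 n) (tJ12 n) (cord 5 2) me_xyz2.

Lemma giso_xyz2 n : giso (iV_xyz2 n) (iE_xyz2 n).
Proof.
by apply: (ladder_giso (mvi := mvi_xyz2) (mid := cord 2 1) (mei := mei_xyz2) (ch := ch_xyz2)) => //;
  ord_cases.
Qed.

(* Contracting x,y,z and c,d,e of J_n in either order gives the same rearrangement. *)
Lemma nab_cde1_nab1 n (a : addr (J n)) :
  nab_cde1 n (nab1 a) = contract (iE_xyz2 n) (nab2 a).
Proof.
case: a => [[l|y] u] //; move: y.
by ord_cases_by ltac:(simpl_ladder; rewrite (contract_ladder _ _ _ _ me_xyz2_inv); simpl_ladder).
Qed.

Ltac depth_differs :=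
  let Fa := fresh "Fa" in
  move=> ? ? Fa; rewrite /depth_changes /depth /= Fa; simpl_ladder;
  rewrite ?eqxx ?ltn_eqF // eq_sym ltn_eqF //.

Section Quadrants.
Variables (n : nat) (fn : addr G0 -> addr (J n)).
Hypothesis fn_rearr : is_rearr fn.

Let g1 := Rep (fun x => nab1 (fn x)).
Let g2 := Rep (fun x => nab2 (fn x)).

Lemma rearr_nab1 : is_rearr (fun x => nab1 (fn x)).
Proof. exact: (rearr_contract (giso_xyz n) fn_rearr (fun x => nab1_contract n (fn x))). Qed.

Lemma rearr_nab2 : is_rearr (fun x => nab2 (fn x)).
Proof. exact: (rearr_contract (giso_cde n) fn_rearr (fun x => nab2_contract n (fn x))). Qed.

(* [g1] itself lies beyond [H_1]; contracting x,y,z does not cross [H_2]. *)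
Lemma quadrant_mp : exists v : rep, [/\ valid v, #|gE (rG v)| <= 2 * n + 9,
  Hhalf fn 1 false v & Hhalf fn 2 true v].
Proof.
exists g1; split; [exact: rearr_nab1 | by rewrite /= !card_sum !card_ord; lia
  | exact: rt_refl | ].
apply: (halfside_contract (giso_xyz n) fn_rearr (fun x => nab1_contract n (fn x))).
by apply: (not_parallel_of_edge (e := inr (cord 9 2) : gE (J n)) fn_rearr); depth_differs.
Qed.

Lemma quadrant_pm : exists v : rep, [/\ valid v, #|gE (rG v)| <= 2 * n + 9,
  Hhalf fn 1 true v & Hhalf fn 2 false v].
Proof.
exists g2; split; [exact: rearr_nab2 | by rewrite /= !card_sum !card_ord; lia | | exact: rt_refl].
apply: (halfside_contract (giso_cde n) fn_rearr (fun x => nab2_contract n (fn x))).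
by apply: (not_parallel_of_edge (e := inr (cord 9 2) : gE (J n)) fn_rearr); depth_differs.
Qed.

(* Contracting v,w,x crosses neither wall. *)
Lemma quadrant_pp : exists v : rep, [/\ valid v, #|gE (rG v)| <= 2 * n + 9,
  Hhalf fn 1 true v & Hhalf fn 2 true v].
Proof.
have vwx x := nab_vwx_contract n (fn x).
exists (Rep (fun x => nab_vwx n (fn x))); split.
- exact: (rearr_contract (giso_vwx n) fn_rearr vwx).
- by rewrite /= !card_sum !card_ord; lia.
- apply: (halfside_contract (giso_vwx n) fn_rearr vwx).
  by apply: (not_parallel_of_edge (e := inr (cord 9 0) : gE (J n)) fn_rearr); depth_differs.
- apply: (halfside_contract (giso_vwx n) fn_rearr vwx).
  by apply: (not_parallel_of_edge (e := inr (cord 9 0) : gE (J n)) fn_rearr); depth_differs.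
Qed.

(* Contracting c,d,e from [g1] does not cross [H_1], and reaches the same
   0-cube as contracting x,y,z from [g2], which does not cross [H_2]. *)
Lemma quadrant_mm : exists v : rep, [/\ valid v, #|gE (rG v)| <= 2 * n + 9,
  Hhalf fn 1 false v & Hhalf fn 2 false v].
Proof.
have cde1 x := nab_cde1_contract n (nab1 (fn x)).
have xyz2 x := nab_cde1_nab1 n (fn x).
exists (Rep (fun x => nab_cde1 n (nab1 (fn x)))); split.
- exact: (rearr_contract (giso_cde1 n) rearr_nab1 cde1).
- by rewrite /= !card_sum !card_ord; lia.
- apply: (halfside_contract (giso_cde1 n) rearr_nab1 cde1).
  by apply: (not_parallel_of_edge (e := inr (cord 9 2) : gE (J n)) fn_rearr); depth_differs.
- apply: (halfside_contract (giso_xyz2 n) rearr_nab2 xyz2).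
  by apply: (not_parallel_of_edge (e := inr (cord 9 7) : gE (J n)) fn_rearr); depth_differs.
Qed.

End Quadrants.

Theorem mainTheorem9 (n : nat) (fn : addr G0 -> addr (J n)) (d1 d2 : bool) :
  is_rearr fn ->
  exists v : rep, [/\ valid v, #|gE (rG v)| <= 2 * n + 9,
                      Hhalf fn 1 d1 v & Hhalf fn 2 d2 v].
Proof.
move=> fn_rearr.
case: d1; case: d2; [exact: quadrant_pp | exact: quadrant_pm | exact: quadrant_mp
  | exact: quadrant_mm].
Qed.
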